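(* Let $h$ be an odd positive integer, $m=3h$, $e=3^h$, and for $u\in\mathrm{GF}(3^m)$ let $Q_u(y)=\mathrm{Tr}(uy^{e+1}+y^2)$, $y\in\mathrm{GF}(3^m)$. Then for every $u\in\mathrm{GF}(3^m)$, at least one of the quadratic forms $Q_u$ and $Q_{-1-u}$ has rank $m$.
   Context: $\mathrm{Tr}$ denotes the absolute trace from $\mathrm{GF}(3^m)$ onto $\mathrm{GF}(3)$. The rank of a quadratic form $Q:\mathrm{GF}(3^m)\to\mathrm{GF}(3)$ is $m-\dim_{\mathrm{GF}(3)}V_Q$, where $V_Q=\{x: Q(x+z)-Q(x)-Q(z)=0\ \text{for all } z\in\mathrm{GF}(3^m)\}$. (For $Q_u$ one has $Q_u(y+z)-Q_u(y)-Q_u(z)=\mathrm{Tr}((u^{e^2}y^{e^2}+uy^e-y)z)$.) *)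

From HB Require Import structures.
From mathcomp Require Import all_boot all_order all_algebra all_field.
Set Implicit Arguments. Unset Strict Implicit. Unset Printing Implicit Defensive.
Import GRing.Theory.
Local Open Scope ring_scope.

(* Absolute trace GF(3^m) -> GF(3): Tr x = sum_{i<m} x^(3^i); its values lie
   in the prime subfield of F, which we identify with GF(3). *)
Definition tr (F : finFieldType) (m : nat) (x : F) : F :=
  \sum_(i < m) x ^+ (3 ^ i)%N.

Definition Qu (F : finFieldType) (m h : nat) (u : F) (y : F) : F :=
  tr m (u * y ^+ (3 ^ h).+1 + y ^+ 2).

Definition radical (F : finFieldType) (Q : F -> F) : {set F} :=
  [set x | [forall z, Q (x + z) - Q x - Q z == 0]].

(* rank Q = m - dim_{GF(3)} V_Q; V_Q is a GF(3)-subspace of GF(3^m), so its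
   GF(3)-dimension is log_3 of its cardinality. *)
Definition qf_rank (F : finFieldType) (m : nat) (Q : F -> F) : nat :=
  (m - logn 3 #|radical Q|)%N.

(* A nonzero y in the radical of Q_u solves L_u(y) := u y^e + (u y)^(e^2) - y = 0;
   applying the Frobenius x |-> x^e (of order 3 on GF(3^(3h))) to this equation gives
   a 3x3 linear system in (y, y^e, y^(e^2)) whose determinant must vanish.  If this
   happens for both u and -1-u, adding the two determinants in characteristic 3
   yields S^2 = -1 for S = u + u^e + u^(e^2), which is fixed by the Frobenius.  For
   odd h, however, 3^h = 3 mod 4, so S^e = S^3 = -S, forcing S = 0. *)
From HB Require Import structures.
From mathcomp Require Import all_boot all_order all_algebra all_field.
From mathcomp Require Import zify ring.
Set Implicit Arguments. Unset Strict Implicit.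
Import GRing.Theory.
Local Open Scope ring_scope.

Lemma qf_rank_full (F : finFieldType) m (Q : F -> F) :
  radical Q \subset [set 0] -> qf_rank m Q = m.
Proof.
move=> /subset_leq_card; rewrite cards1 /qf_rank.
by case: #|_| => [|[|]] // _; rewrite ?logn0 ?logn1 subn0.
Qed.

(* [symdet3 a b c] is the determinant of [[-1, a, c], [a, -1, b], [c, b, -1]]. *)
Definition symdet3 (R : pzRingType) (a b c : R) : R :=
  -1 + a ^+ 2 + b ^+ 2 + c ^+ 2 + 2 * a * b * c.

Lemma symdet3_kernel (R : idomainType) (a b c p q r : R) :
  - p + a * q + c * r = 0 -> - q + b * r + a * p = 0 -> - r + c * p + b * q = 0 ->
  p != 0 -> symdet3 a b c = 0.
Proof.
move=> E0 E1 E2 p0.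
have : symdet3 a b c * p = (1 - b ^+ 2) * (- p + a * q + c * r)
   + (a + b * c) * (- q + b * r + a * p) + (a * b + c) * (- r + c * p + b * q).
  by rewrite /symdet3; ring.
by rewrite E0 E1 E2 !mulr0 !addr0 => /eqP; rewrite mulf_eq0 (negPf p0) orbF => /eqP.
Qed.

Lemma sqrt_neg1_expr3n (R : pzRingType) h (s : R) :
  odd h -> s ^+ 2 = -1 -> s ^+ (3 ^ h) = - s.
Proof.
move=> oh s2; have s4 : s ^+ 4 = 1 by rewrite (exprM s 2 2) s2 expr2 mulrNN mulr1.
have mod4 : (3 ^ h %% 4 = 3)%N.
  rewrite -(odd_double_half h) oh -muln2 add1n expnS (mulnC _ 2) expnM.
  by rewrite -modnMmr -modnXm exp1n.
rewrite (divn_eq (3 ^ h) 4) mod4 mulnC.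
by rewrite exprD exprM s4 expr1n mul1r exprS s2 mulrN1.
Qed.

Section CharacteristicThree.
Variable F : finFieldType.
Hypothesis F3 : (3 \in [pchar F])%N.

Lemma natr3 : (3 : F) = 0.
Proof. by rewrite -(pcharf0 F3). Qed.

Lemma pchar_nat_exp3 k : [pchar F].-nat (3 ^ k)%N.
Proof. by rewrite (eq_pnat _ (pcharf_eq F3)) pnatX pnat_id. Qed.

Lemma exprD_exp3 k (x y : F) : (x + y) ^+ (3 ^ k) = x ^+ (3 ^ k) + y ^+ (3 ^ k).
Proof. exact/exprDn_pchar/pchar_nat_exp3. Qed.

Lemma exprN_exp3 k (x : F) : (- x) ^+ (3 ^ k) = - x ^+ (3 ^ k).
Proof. exact/exprNn_pchar/pchar_nat_exp3. Qed.

Lemma trD m (x y : F) : tr m (x + y) = tr m x + tr m y.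
Proof. by rewrite /tr -big_split; apply: eq_bigr => i _; rewrite exprD_exp3. Qed.

Lemma trN m (x : F) : tr m (- x) = - tr m x.
Proof. by rewrite /tr -sumrN; apply: eq_bigr => i _; rewrite exprN_exp3. Qed.

Lemma trB m (x y : F) : tr m (x - y) = tr m x - tr m y.
Proof. by rewrite trD trN. Qed.

Lemma symdet3_add_shift (a b c : F) :
  symdet3 a b c + symdet3 (- 1 - a) (- 1 - b) (- 1 - c) = - ((a + b + c) ^+ 2 + 1).
Proof.
set S := a + b + c.
transitivity (3 * (S ^+ 2 - 2 * (a * b + b * c + c * a)) - (S ^+ 2 + 1)).
  by rewrite /S /symdet3; ring.
by rewrite natr3 mul0r sub0r.
Qed.

Lemma sqrt_neg1_exp3_neq h (s : F) : odd h -> s ^+ 2 = -1 -> s ^+ (3 ^ h) != s.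
Proof.
move=> oh s2; rewrite sqrt_neg1_expr3n //; apply: contraTneq isT => sN.
have s0 : s = 0.
  transitivity (3 * s - (s + s)); first by ring.
  by rewrite natr3 mul0r -{2}sN subrr subrr.
by move: s2; rewrite s0 expr0n /= => /eqP; rewrite eq_sym oppr_eq0 oner_eq0.
Qed.

End CharacteristicThree.

Lemma tr_exp3 (F : finFieldType) m (x : F) : x ^+ (3 ^ m) = x ->
  tr m (x ^+ 3) = tr m x.
Proof.
case: m => [|m] xm; first by rewrite /tr !big_ord0.
rewrite /tr big_ord_recr [RHS]big_ord_recl /= -exprM -expnS xm expn0 expr1 addrC.
by congr (_ + _); apply: eq_bigr => i _; rewrite -exprM -expnS.
Qed.

Lemma tr_expX3 (F : finFieldType) m k (x : F) : x ^+ (3 ^ m) = x ->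
  tr m (x ^+ (3 ^ k)) = tr m x.
Proof.
move=> xm; elim: k => [|k IH]; first by rewrite expr1.
by rewrite expnSr exprM tr_exp3 // -exprM mulnC exprM xm.
Qed.

Lemma size_sum_XnX3 (F : finFieldType) k :
  (size (\sum_(i < k) 'X^(3 ^ i)%N : {poly F})%R <= 3 ^ k)%N.
Proof.
elim: k => [|k IH]; first by rewrite big_ord0 size_poly0.
rewrite big_ord_recr /=; apply: leq_trans (size_polyD _ _) _.
rewrite geq_max size_polyXn expnS (leq_trans IH) ?leq_pmull //=.
by have := expn_gt0 3 k; lia.
Qed.

(* The trace is a polynomial of degree 3^m, so it cannot vanish on more points. *)
Lemma tr_neq0 (F : finFieldType) m : (3 ^ m < #|F|)%N -> exists w : F, tr m.+1 w != 0.
Proof.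
move=> cardF; apply/existsP; apply: contraTT cardF => /existsPn tr0.
pose P : {poly F} := \sum_(i < m.+1) 'X^(3 ^ i)%N.
have sizeP : size P = (3 ^ m).+1.
  rewrite /P big_ord_recr /= addrC size_polyDl size_polyXn //.
  exact: leq_ltn_trans (size_sum_XnX3 _ _) _.
have P_neq0 : P != 0 by rewrite -size_poly_gt0 sizeP.
have rootP : all (root P) (enum F).
  apply/allP => x _; rewrite /root; have /negPn/eqP <- := tr0 x.
  by rewrite /P horner_sum; apply/eqP/eq_bigr => i _; rewrite hornerXn.
rewrite -leqNgt cardE -ltnS -sizeP; exact: max_poly_roots P_neq0 rootP (enum_uniq _).
Qed.

Section QuadraticForms.
Variables (F : finFieldType) (h : nat).
Hypothesis F3 : (3 \in [pchar F])%N.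
Hypothesis cardF : #|F| = (3 ^ (3 * h))%N.

Definition frob (x : F) : F := x ^+ (3 ^ h).

Lemma frobD x y : frob (x + y) = frob x + frob y. Proof. exact: exprD_exp3. Qed.
Lemma frobN x : frob (- x) = - frob x. Proof. exact: exprN_exp3. Qed.
Lemma frobM x y : frob (x * y) = frob x * frob y. Proof. exact: exprMn. Qed.
Lemma frob0 : frob 0 = 0. Proof. by rewrite /frob expr0n expn_eq0. Qed.

Lemma frobB1 x : frob (- 1 - x) = - 1 - frob x.
Proof. by rewrite frobD !frobN /frob expr1n. Qed.

Lemma frob_cycle x : frob (frob (frob x)) = x.
Proof.
by rewrite /frob -!exprM -!expnD (_ : (h + (h + h) = 3 * h)%N) -?cardF ?expf_card //; lia.
Qed.

Definition Lu (u y : F) : F := u * frob y + frob (frob (u * y)) - y.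

(* Raising u y z^e to the power e^2 inside the trace turns it into (u y)^(e^2) z. *)
Lemma Qu_polar (u y z : F) :
  Qu (3 * h) h u (y + z) - Qu (3 * h) h u y - Qu (3 * h) h u z = tr (3 * h) (Lu u y * z).
Proof.
have fixF (x : F) : x ^+ (3 ^ (3 * h)) = x by rewrite -cardF expf_card.
have cross : tr (3 * h) (u * y * frob z) = tr (3 * h) (frob (frob (u * y)) * z).
  rewrite /frob -(tr_expX3 (h + h) (fixF _)) exprMn -exprM -expnD -!exprM -expnD.
  by rewrite (_ : (h + (h + h) = 3 * h)%N) ?fixF //; lia.
rewrite /Qu -!trB // (_ : Lu u y * z =
    u * frob y * z - y * z + frob (frob (u * y)) * z); last by rewrite /Lu; ring.
rewrite [RHS]trD // -cross -trD //; congr (tr _ _).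
rewrite !exprS exprD_exp3 // -!/(frob _).
transitivity (u * frob y * z - y * z + u * y * frob z + 3 * (y * z)); first by ring.
by rewrite natr3 // mul0r addr0.
Qed.

Lemma Lu_radical (u y : F) : (0 < h)%N ->
  y \in radical (Qu (3 * h) h u) -> Lu u y = 0.
Proof.
move=> h0; rewrite inE => /forallP polar0; apply: contraTeq isT => L0.
have [|w trw] := @tr_neq0 F (3 * h).-1.
  by rewrite cardF ltn_exp2l //; lia.
rewrite prednK in trw; last by lia.
by have := polar0 ((Lu u y)^-1 * w); rewrite Qu_polar mulrA mulfV // mul1r (negPf trw).
Qed.

Lemma Lu_kernel_symdet3 (u y : F) : y != 0 -> Lu u y = 0 ->
  symdet3 u (frob u) (frob (frob u)) = 0.
Proof.
move=> y0 L0.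
have E0 : - y + u * frob y + frob (frob u) * frob (frob y) = 0.
  by rewrite -L0 /Lu !frobM [RHS]addrC addrA.
have E1 := congr1 frob E0; rewrite frob0 !frobD frobN !frobM !frob_cycle in E1.
have E2 := congr1 frob E1; rewrite frob0 !frobD frobN !frobM !frob_cycle in E2.
exact: symdet3_kernel E0 E1 E2 y0.
Qed.

Lemma Qu_rank_full_or_symdet3 (u : F) : (0 < h)%N ->
  qf_rank (3 * h) (Qu (3 * h) h u) = (3 * h)%N \/
  symdet3 u (frob u) (frob (frob u)) = 0.
Proof.
move=> h0; have [rad0|] := boolP (radical (Qu (3 * h) h u) \subset [set 0]).
  by left; apply: qf_rank_full.
case/subsetPn => y yR; rewrite inE => y0; right.
exact: Lu_kernel_symdet3 y0 (Lu_radical h0 yR).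
Qed.

End QuadraticForms.

Theorem mainTheorem13 (h : nat) (F : finFieldType) :
  odd h -> (0 < h)%N ->
  (3 \in [pchar F])%N -> #|F| = (3 ^ (3 * h))%N ->
  forall u : F,
    qf_rank (3 * h) (Qu (3 * h) h u) = (3 * h)%N \/
    qf_rank (3 * h) (Qu (3 * h) h (- 1 - u)) = (3 * h)%N.
Proof.
move=> oh h0 F3 cardF u.
have [|det_u] := Qu_rank_full_or_symdet3 F3 cardF u h0; first by left.
have [|det_v] := Qu_rank_full_or_symdet3 F3 cardF (- 1 - u) h0; first by right.
exfalso; rewrite !frobB1 // in det_v.
set S := u + frob h u + frob h (frob h u).
have S2 : S ^+ 2 = -1.
  apply/eqP; rewrite -subr_eq0 opprK; apply/eqP/oppr_inj.
  by rewrite oppr0 -symdet3_add_shift // det_u det_v addr0.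
have fixS : frob h S = S by rewrite !frobD // frob_cycle // addrC addrA.
exact: (negP (sqrt_neg1_exp3_neq F3 oh S2)) (introT eqP fixS).
Qed.
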